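(* Let $\tilde a,\tilde b,\tilde c,\tilde d>0$, $\tilde p\in(4,\infty)$, $\tilde q\in(0,2)$, and $f(t)=\tilde at^2+\tilde bt^4-\tilde ct^{\tilde p}-\tilde dt^{\tilde q}$ for $t\ge0$. Put $X=\frac{8(4-\tilde q)}{\tilde p(\tilde p-2)(\tilde p-\tilde q)}$. If $$\Big[X^{\frac{4-\tilde q}{\tilde p-4}}-X^{\frac{\tilde p-\tilde q}{\tilde p-4}}\Big]\Big[\frac{\tilde a}{\tilde d}\Big(\frac{\tilde b}{\tilde c}\Big)^{\frac{2-\tilde q}{\tilde p-4}}+\frac1{\tilde d}\frac{\tilde b^{\frac{\tilde p-\tilde q}{\tilde p-4}}}{\tilde c^{\frac{4-\tilde q}{\tilde p-4}}}\Big]>1,$$ then $f$ has on $[0,\infty)$ a local strict minimum at a negative level and a global strict maximum at a positive level. *)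

From Stdlib Require Import Reals.
Open Scope R_scope.

(* Real power t^s for t >= 0, with the convention 0^s = 0 (used for s > 0). *)
Definition rpow (t s : R) : R := if Rle_dec t 0 then 0 else Rpower t s.

Definition fabcd (a b c d p q : R) (t : R) : R :=
  a * t ^ 2 + b * t ^ 4 - c * rpow t p - d * rpow t q.

Definition strict_local_min_on_nonneg (g : R -> R) (t0 : R) : Prop :=
  0 <= t0 /\ exists delta, 0 < delta /\
    forall t, 0 <= t -> t <> t0 -> Rabs (t - t0) < delta -> g t0 < g t.

Definition strict_global_max_on_nonneg (g : R -> R) (t1 : R) : Prop :=
  0 <= t1 /\ forall t, 0 <= t -> t <> t1 -> g t < g t1.

(* For t > 0 one has f'(t) = t^(q-1) g(t), g'(t) = t^(1-q) h(t) and
   h'(t) = t k(t), where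
     g(t) = 2a t^(2-q) + 4b t^(4-q) - pc t^(p-q) - qd,
     h(t) = 2a(2-q) + 4b(4-q) t^2 - pc(p-q) t^(p-2),
     k(t) = 8b(4-q) - pc(p-q)(p-2) t^(p-4).
   With tau^(p-4) = X b / c (X as in the statement), h > 0 on (0,tau] and
   k < 0 beyond tau; hence once h is nonpositive it stays negative, so g has
   no interior minimum.  As g < 0 near 0 and near oo, g has the sign pattern
   (-,+,-) as soon as it is positive somewhere, i.e. f decreases, increases,
   then decreases.  The hypothesis of the theorem implies f(tau) > 0
   (this is where X is tuned); since f < 0 near 0, f increases somewhere and
   g is positive somewhere.  The two turning points of f are then a negative
   strict local minimum and a positive strict global maximum. *)

From Stdlib Require Import Reals Lra Ranalysis5.
Open Scope R_scope.

Lemma Rpower_pos (t e : R) : 0 < Rpower t e.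
Proof. apply exp_pos. Qed.

Lemma Rpower_add_exp (t e1 e2 e : R) :
  e1 + e2 = e -> Rpower t e1 * Rpower t e2 = Rpower t e.
Proof. intros <-; symmetry; apply Rpower_plus. Qed.

Lemma pow_as_Rpower (n : nat) (t : R) : 0 < t -> t ^ n = Rpower t (INR n).
Proof. intros ht; symmetry; apply Rpower_pow; exact ht. Qed.

Lemma Rpower_antitone_exp (t e1 e2 : R) :
  0 < t <= 1 -> e1 <= e2 -> Rpower t e2 <= Rpower t e1.
Proof.
  intros [ht0 ht1] he. unfold Rpower.
  assert (hln : ln t <= 0).
  { rewrite <- ln_1. destruct ht1 as [ht1 | ->]; [left; apply ln_increasing |]; lra. }
  destruct (Req_dec (e2 * ln t) (e1 * ln t)) as [-> | hne]; [lra |].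
  left; apply exp_increasing; nra.
Qed.

Lemma ln_quot (x y : R) : 0 < x -> 0 < y -> ln (x / y) = ln x - ln y.
Proof.
  intros hx hy. unfold Rdiv. rewrite ln_mult, ln_Rinv; [ring | exact hy | exact hx |].
  apply Rinv_0_lt_compat, hy.
Qed.

Lemma Rpower_combination_small (alpha beta e1 e2 m : R) :
  0 <= alpha -> 0 <= beta -> 0 < e1 <= e2 -> 0 < m ->
  exists s, 0 < s /\ forall t, 0 < t <= s ->
    alpha * Rpower t e1 + beta * Rpower t e2 < m.
Proof.
  intros ha hb [he1 he12] hm.
  set (r := m / (alpha + beta + 1)).
  assert (hr : 0 < r) by (apply Rdiv_lt_0_compat; lra).
  exists (Rmin 1 (Rpower r (/ e1))).
  split; [apply Rmin_glb_lt; [lra | apply Rpower_pos] |].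
  intros t [ht hts].
  assert (ht1 : t <= 1) by (eapply Rle_trans; [exact hts | apply Rmin_l]).
  assert (htr : t <= Rpower r (/ e1)) by (eapply Rle_trans; [exact hts | apply Rmin_r]).
  assert (h1 : Rpower t e1 <= r).
  { replace r with (Rpower (Rpower r (/ e1)) e1)
      by (rewrite Rpower_mult, Rinv_l, Rpower_1; lra).
    apply Rle_Rpower_l; lra. }
  assert (h2 : Rpower t e2 <= Rpower t e1) by (apply Rpower_antitone_exp; lra).
  assert (hmr : (alpha + beta + 1) * r = m) by (unfold r; field; lra).
  pose proof (Rpower_pos t e2).
  nra.
Qed.

Lemma dpl_add (f g : R -> R) (t l1 l2 : R) :
  derivable_pt_lim f t l1 -> derivable_pt_lim g t l2 ->
  derivable_pt_lim (fun s => f s + g s) t (l1 + l2).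
Proof. apply derivable_pt_lim_plus. Qed.

Lemma dpl_sub (f g : R -> R) (t l1 l2 : R) :
  derivable_pt_lim f t l1 -> derivable_pt_lim g t l2 ->
  derivable_pt_lim (fun s => f s - g s) t (l1 - l2).
Proof. apply derivable_pt_lim_minus. Qed.

Lemma dpl_const (k t : R) : derivable_pt_lim (fun _ => k) t 0.
Proof. apply derivable_pt_lim_const. Qed.

Lemma dpl_pow_term (k : R) (n : nat) (t : R) :
  derivable_pt_lim (fun s => k * s ^ n) t (k * (INR n * t ^ Nat.pred n)).
Proof. apply (derivable_pt_lim_scal (fun s => s ^ n)), derivable_pt_lim_pow. Qed.

Lemma dpl_Rpower_term (k e t : R) : 0 < t ->
  derivable_pt_lim (fun s => k * Rpower s e) t (k * (e * Rpower t (e - 1))).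
Proof. intros ht. apply (derivable_pt_lim_scal (fun s => Rpower s e)), derivable_pt_lim_power, ht. Qed.

Lemma dpl_eq (f : R -> R) (t l l' : R) :
  derivable_pt_lim f t l -> l = l' -> derivable_pt_lim f t l'.
Proof. intros H <-; exact H. Qed.

Definition no_interior_min (g : R -> R) : Prop :=
  forall x y z, 0 < x -> x < y -> y < z -> g y <= g x -> g y <= g z -> False.

(* Functions F on (0,oo) whose derivative is phi * g with phi > 0, so that
   F' has the sign of g.  This is used three times: for h_red, g_red and f. *)
Section DerivativeSign.

Variables F phi g : R -> R.
Hypothesis F_deriv : forall t, 0 < t -> derivable_pt_lim F t (phi t * g t).
Hypothesis phi_pos : forall t, 0 < t -> 0 < phi t.

Lemma F_continuous (t : R) : 0 < t -> continuity_pt F t.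
Proof. intros ht. apply derivable_continuous_pt. exists (phi t * g t). exact (F_deriv t ht). Qed.

Lemma F_mean_value (x y : R) : 0 < x -> x < y ->
  exists u, x < u < y /\ F y - F x = phi u * g u * (y - x).
Proof.
  intros hx hxy.
  destruct (MVT_cor2 F (fun t => phi t * g t) x y hxy) as [u [hu hxu]].
  - intros t ht. apply F_deriv. lra.
  - exists u. split; [exact hxu | exact hu].
Qed.

Lemma F_increasing (x y : R) : 0 < x -> x < y ->
  (forall t, x < t < y -> 0 < g t) -> F x < F y.
Proof.
  intros hx hxy hg. destruct (F_mean_value x y hx hxy) as [u [hu Hu]].
  pose proof (phi_pos u ltac:(lra)). pose proof (hg u hu).
  assert (0 < phi u * g u * (y - x)) by (repeat apply Rmult_lt_0_compat; lra).
  lra.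
Qed.

Lemma F_decreasing (x y : R) : 0 < x -> x < y ->
  (forall t, x < t < y -> g t < 0) -> F y < F x.
Proof.
  intros hx hxy hg. destruct (F_mean_value x y hx hxy) as [u [hu Hu]].
  pose proof (phi_pos u ltac:(lra)). pose proof (hg u hu).
  assert (0 < phi u * (- g u) * (y - x)) by (repeat apply Rmult_lt_0_compat; lra).
  lra.
Qed.

Lemma g_pos_where_increasing (x y : R) : 0 < x -> x < y -> F x < F y ->
  exists w, x < w < y /\ 0 < g w.
Proof.
  intros hx hxy hF. destruct (F_mean_value x y hx hxy) as [u [hu Hu]].
  exists u. split; [exact hu |].
  pose proof (phi_pos u ltac:(lra)).
  destruct (Rlt_le_dec 0 (g u)) as [h | h]; [exact h |].
  assert (0 <= phi u * (- g u) * (y - x)) by (repeat apply Rmult_le_pos; lra).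
  lra.
Qed.

Lemma no_interior_min_of_derivative
  (g_stays_neg : forall u v, 0 < u -> u < v -> g u <= 0 -> g v < 0) :
  no_interior_min F.
Proof.
  intros x y z hx hxy hyz hyx hyz'.
  destruct (F_mean_value x y hx hxy) as [u [hu Hu]].
  destruct (F_mean_value y z ltac:(lra) hyz) as [v [hv Hv]].
  pose proof (phi_pos u ltac:(lra)). pose proof (phi_pos v ltac:(lra)).
  assert (hgu : g u <= 0).
  { destruct (Rle_lt_dec (g u) 0) as [h | h]; [exact h |].
    assert (0 < phi u * g u * (y - x)) by (repeat apply Rmult_lt_0_compat; lra). lra. }
  pose proof (g_stays_neg u v ltac:(lra) ltac:(lra) hgu) as hgv.
  assert (0 < phi v * (- g v) * (z - y)) by (repeat apply Rmult_lt_0_compat; lra).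
  lra.
Qed.

End DerivativeSign.

Lemma sign_pattern (g : R -> R) (w L : R) :
  (forall t, 0 < t -> continuity_pt g t) -> no_interior_min g ->
  (exists s, 0 < s /\ forall t, 0 < t <= s -> g t < 0) ->
  0 < w -> 0 < g w -> w < L -> g L < 0 ->
  exists t1 t2, 0 < t1 < t2 /\
    (forall t, 0 < t < t1 -> g t < 0) /\
    (forall t, t1 < t < t2 -> 0 < g t) /\
    (forall t, t2 < t -> g t < 0).
Proof.
  intros hcont hmin [s0 [hs0 hneg]] hw hgw hwL hgL.
  set (s := Rmin s0 (w / 2)).
  assert (hs : 0 < s) by (apply Rmin_glb_lt; lra).
  assert (hsw : s < w) by (apply Rle_lt_trans with (w / 2); [apply Rmin_r | lra]).
  assert (hgs : g s < 0) by (apply hneg; split; [lra | apply Rmin_l]).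
  destruct (IVT_interv g s w) as [t1 [ht1 hg1]]; [intros; apply hcont; lra | lra | lra | lra |].
  destruct (IVT_interv (fun t => - g t) w L) as [t2 [ht2 hg2]];
    [intros; apply continuity_pt_opp, hcont; lra | lra | lra | lra |].
  cbv beta in hg2.
  assert (ht1w : s < t1 < w).
  { assert (t1 <> s) by (intros ->; lra). assert (t1 <> w) by (intros ->; lra). lra. }
  assert (ht2w : w < t2) by (assert (t2 <> w) by (intros ->; lra); lra).
  exists t1, t2. repeat split; try lra.
  - intros t ht. destruct (Rlt_le_dec (g t) 0) as [h | h]; [exact h |].
    exfalso. apply (hmin t t1 w); lra.
  - intros t ht. destruct (Rlt_le_dec 0 (g t)) as [h | h]; [exact h |].
    exfalso. apply (hmin t1 t t2); lra.
  - intros t ht. destruct (Rlt_le_dec (g t) 0) as [h | h]; [exact h |].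
    exfalso. apply (hmin w t2 t); lra.
Qed.

Definition down_up_down (F : R -> R) (t1 t2 : R) : Prop :=
  0 < t1 < t2 /\
  (forall x y, 0 < x -> x < y -> y <= t1 -> F y < F x) /\
  (forall x y, t1 <= x -> x < y -> y <= t2 -> F x < F y) /\
  (forall x y, t2 <= x -> x < y -> F y < F x).

Lemma down_up_down_signs (F : R -> R) (t1 t2 : R) :
  down_up_down F t1 t2 ->
  (exists s, 0 < s /\ forall t, 0 < t <= s -> F t < 0) ->
  (exists T, 0 < T /\ 0 < F T) ->
  (forall t, 0 < t <= t1 -> F t < 0) /\ 0 < F t2.
Proof.
  intros [ht [dec1 [inc dec2]]] [s [hs hneg]] [T [hT hFT]].
  assert (neg : forall t, 0 < t <= t1 -> F t < 0).
  { intros t ht'. destruct (Rle_lt_dec t s) as [h | h]; [apply hneg; lra |].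
    pose proof (dec1 s t hs h ltac:(lra)). pose proof (hneg s ltac:(lra)). lra. }
  split; [exact neg |].
  assert (hT1 : t1 < T) by (destruct (Rle_lt_dec T t1) as [h | h]; [pose proof (neg T ltac:(lra)) |]; lra).
  destruct (Rtotal_order T t2) as [h | [-> | h]]; [| exact hFT |].
  - pose proof (inc T t2 ltac:(lra) h ltac:(lra)). lra.
  - pose proof (dec2 t2 T ltac:(lra) h). lra.
Qed.

Lemma extrema_of_down_up_down (F : R -> R) (t1 t2 : R) :
  down_up_down F t1 t2 -> F 0 <= 0 ->
  (exists s, 0 < s /\ forall t, 0 < t <= s -> F t < 0) ->
  (exists T, 0 < T /\ 0 < F T) ->
  (strict_local_min_on_nonneg F t1 /\ F t1 < 0) /\
  (strict_global_max_on_nonneg F t2 /\ 0 < F t2).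
Proof.
  intros Hshape hF0 hnear0 hpos.
  destruct (down_up_down_signs F t1 t2 Hshape hnear0 hpos) as [neg pos].
  destruct Hshape as [ht [dec1 [inc dec2]]].
  unfold strict_local_min_on_nonneg, strict_global_max_on_nonneg.
  split; split; [split; [lra |] | apply neg; lra | split; [lra |] | exact pos].
  - exists (Rmin t1 (t2 - t1)). split; [apply Rmin_glb_lt; lra |].
    intros t _ hne hclose.
    assert (h1 : Rabs (t - t1) < t1) by (eapply Rlt_le_trans; [exact hclose | apply Rmin_l]).
    assert (h2 : Rabs (t - t1) < t2 - t1) by (eapply Rlt_le_trans; [exact hclose | apply Rmin_r]).
    apply Rabs_def2 in h1. apply Rabs_def2 in h2.
    destruct (Rtotal_order t t1) as [h | [h | h]]; [apply dec1 | contradiction | apply inc]; lra.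
  - intros t [h0 | <-] hne; [| lra].
    destruct (Rle_lt_dec t t1) as [h | h]; [pose proof (neg t ltac:(lra)); lra |].
    destruct (Rtotal_order t t2) as [h' | [h' | h']]; [apply inc | contradiction | apply dec2]; lra.
Qed.

Section Profile.

Variables a b c d p q : R.
Hypotheses (ha : 0 < a) (hb : 0 < b) (hc : 0 < c) (hd : 0 < d)
  (hp : 4 < p) (hq0 : 0 < q) (hq2 : q < 2).

Local Notation f := (fabcd a b c d p q).

Lemma f_at_zero : f 0 = 0.
Proof. unfold fabcd, rpow. destruct (Rle_dec 0 0); [ring | lra]. Qed.

Lemma f_on_pos (t : R) : 0 < t ->
  f t = a * t ^ 2 + b * t ^ 4 - c * Rpower t p - d * Rpower t q.
Proof. intros ht. unfold fabcd, rpow. destruct (Rle_dec t 0); [lra | reflexivity]. Qed.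

Lemma f_factor (t : R) : 0 < t ->
  f t = Rpower t q * (a * Rpower t (2 - q) + b * Rpower t (4 - q)
                      - c * Rpower t (p - q) - d).
Proof.
  intros ht. rewrite f_on_pos, !pow_as_Rpower by exact ht.
  rewrite <- (Rpower_add_exp t q (2 - q) (INR 2)), <- (Rpower_add_exp t q (4 - q) (INR 4)),
    <- (Rpower_add_exp t q (p - q) p) by (simpl; ring).
  ring.
Qed.

(* The reduced derivatives: f' = t^(q-1) g_red, g_red' = t^(1-q) h_red,
   h_red' = t k_red. *)
Definition g_red (t : R) : R :=
  2 * a * Rpower t (2 - q) + 4 * b * Rpower t (4 - q) - p * c * Rpower t (p - q) - q * d.
Definition h_red (t : R) : R :=
  2 * a * (2 - q) + 4 * b * (4 - q) * t ^ 2 - p * c * (p - q) * Rpower t (p - 2).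
Definition k_red (t : R) : R :=
  8 * b * (4 - q) - p * c * (p - q) * (p - 2) * Rpower t (p - 4).

(* The three derivative identities, by term-by-term differentiation and
   t^(e1) t^(e2) = t^(e1+e2); f is differentiable at t > 0 because it agrees
   with the real-power expression on (0, 2t). *)
Lemma f_deriv (t : R) : 0 < t -> derivable_pt_lim f t (Rpower t (q - 1) * g_red t).
Proof.
  intros ht.
  apply (derivable_pt_lim_locally_ext
           (fun s => a * s ^ 2 + b * s ^ 4 - c * Rpower s p - d * Rpower s q) _ t 0 (2 * t));
    [lra | intros s hs; symmetry; apply f_on_pos; lra |].
  eapply dpl_eq.
  { apply dpl_sub; [apply dpl_sub; [apply dpl_add; apply dpl_pow_term | apply dpl_Rpower_term, ht]
                   | apply dpl_Rpower_term, ht]. }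
  unfold g_red. simpl Nat.pred. rewrite !pow_as_Rpower by exact ht.
  rewrite <- (Rpower_add_exp t (q - 1) (2 - q) (INR 1)),
    <- (Rpower_add_exp t (q - 1) (4 - q) (INR 3)),
    <- (Rpower_add_exp t (q - 1) (p - q) (p - 1)) by (simpl; ring).
  simpl INR. ring.
Qed.

Lemma g_deriv (t : R) : 0 < t -> derivable_pt_lim g_red t (Rpower t (1 - q) * h_red t).
Proof.
  intros ht. unfold g_red.
  eapply dpl_eq.
  { apply dpl_sub; [apply dpl_sub; [apply dpl_add |] |]; (apply dpl_Rpower_term, ht || apply dpl_const). }
  unfold h_red. rewrite !pow_as_Rpower by exact ht.
  rewrite <- (Rpower_add_exp t (1 - q) (INR 2) (4 - q - 1)),
    <- (Rpower_add_exp t (1 - q) (p - 2) (p - q - 1)) by (simpl; ring).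
  replace (2 - q - 1) with (1 - q) by ring. ring.
Qed.

Lemma h_deriv (t : R) : 0 < t -> derivable_pt_lim h_red t (t * k_red t).
Proof.
  intros ht. unfold h_red.
  eapply dpl_eq.
  { apply dpl_sub; [apply dpl_add; [apply dpl_const | apply dpl_pow_term] | apply dpl_Rpower_term, ht]. }
  unfold k_red.
  rewrite <- (Rpower_add_exp t 1 (p - 4) (p - 2 - 1)) by ring.
  rewrite Rpower_1 by exact ht. simpl. ring.
Qed.

(* The threshold tau: tau^(p-4) = X b / c, where h_red changes its behaviour. *)
Definition X : R := 8 * (4 - q) / (p * (p - 2) * (p - q)).
Definition tau : R := Rpower (X * b / c) (/ (p - 4)).

(* X lies in (0,1] since p (p-2) > 8 and p - q > 4 - q. *)
Lemma X_bounds : 0 < X <= 1.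
Proof.
  unfold X.
  assert (hden : 0 < p * (p - 2) * (p - q)) by (repeat apply Rmult_lt_0_compat; lra).
  assert (h8 : 8 < p * (p - 2)) by nra.
  assert (hlt : 8 * (4 - q) <= p * (p - 2) * (p - q)) by nra.
  split; [apply Rdiv_lt_0_compat; lra |].
  apply Rmult_le_reg_r with (p * (p - 2) * (p - q)); [exact hden |].
  unfold Rdiv. rewrite Rmult_assoc, Rinv_l; lra.
Qed.

Lemma tau_pos : 0 < tau.
Proof. apply Rpower_pos. Qed.

Lemma tau_key : p * c * (p - q) * (p - 2) * Rpower tau (p - 4) = 8 * b * (4 - q).
Proof.
  pose proof X_bounds.
  unfold tau. rewrite Rpower_mult, Rinv_l, Rpower_1 by (try apply Rdiv_lt_0_compat; nra).
  unfold X. field. repeat split; lra.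
Qed.

(* On (0,tau]: p c (p-q) t^(p-4) <= 8b(4-q)/(p-2) < 4b(4-q), so h_red > 0. *)
Lemma h_pos_below_tau (t : R) : 0 < t <= tau -> 0 < h_red t.
Proof.
  intros [ht htau]. unfold h_red.
  rewrite <- (Rpower_add_exp t (INR 2) (p - 4) (p - 2)), <- pow_as_Rpower by (simpl; lra || ring).
  assert (hle : Rpower t (p - 4) <= Rpower tau (p - 4)) by (apply Rle_Rpower_l; lra).
  assert (hK : 0 < p * c * (p - q)) by (repeat apply Rmult_lt_0_compat; lra).
  assert (hbound : p * c * (p - q) * (p - 2) * Rpower t (p - 4) <= 8 * b * (4 - q)).
  { rewrite <- tau_key. apply Rmult_le_compat_l; [nra | exact hle]. }
  assert (hgap : 0 < 4 * b * (4 - q) * (p - 4)) by (repeat apply Rmult_lt_0_compat; lra).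
  assert (hbr : 0 < 4 * b * (4 - q) - p * c * (p - q) * Rpower t (p - 4)).
  { apply Rmult_lt_reg_l with (p - 2); [lra |]. rewrite Rmult_0_r. nra. }
  pose proof (pow_lt t 2 ht).
  nra.
Qed.

Lemma k_neg_above_tau (t : R) : tau < t -> k_red t < 0.
Proof.
  intros ht. unfold k_red. pose proof tau_pos. pose proof tau_key.
  assert (hlt : Rpower tau (p - 4) < Rpower t (p - 4)) by (apply Rlt_Rpower_l; lra).
  assert (hK : 0 < p * c * (p - q) * (p - 2)) by (repeat apply Rmult_lt_0_compat; lra).
  nra.
Qed.

(* Once nonpositive, h_red stays negative: it is positive up to tau and
   decreasing beyond. *)
Lemma h_stays_neg (u v : R) : 0 < u -> u < v -> h_red u <= 0 -> h_red v < 0.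
Proof.
  intros hu huv hhu.
  destruct (Rle_lt_dec u tau) as [h | h]; [pose proof (h_pos_below_tau u (conj hu h)); lra |].
  enough (h_red v < h_red u) by lra.
  apply (F_decreasing h_red (fun t => t) k_red); [exact h_deriv | intros; assumption | exact hu | exact huv |].
  intros t ht. apply k_neg_above_tau. lra.
Qed.

(* Since g_red' = t^(1-q) h_red, g_red has no interior minimum. *)
Lemma g_no_interior_min : no_interior_min g_red.
Proof.
  apply (no_interior_min_of_derivative g_red (fun t => Rpower t (1 - q)) h_red g_deriv).
  - intros t _. apply Rpower_pos.
  - exact h_stays_neg.
Qed.

(* g_red -> -qd < 0 at 0 ... *)
Lemma g_neg_near_zero : exists s, 0 < s /\ forall t, 0 < t <= s -> g_red t < 0.
Proof.
  destruct (Rpower_combination_small (2 * a) (4 * b) (2 - q) (4 - q) (q * d))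
    as [s [hs hsmall]]; [lra | lra | lra | apply Rmult_lt_0_compat; lra |].
  exists s. split; [exact hs |]. intros t ht.
  specialize (hsmall t ht). unfold g_red.
  assert (0 < p * c * Rpower t (p - q))
    by (repeat apply Rmult_lt_0_compat; [lra | lra | apply Rpower_pos]).
  lra.
Qed.

(* ... and g_red -> -oo at oo, because the term -pc t^(p-q) dominates. *)
Lemma g_eventually_neg (C : R) : exists L, C < L /\ g_red L < 0.
Proof.
  set (M := (2 * a + 4 * b) / (p * c)).
  assert (hM : 0 < M) by (apply Rdiv_lt_0_compat; nra).
  set (L := Rpower (M + 1) (/ (p - 4)) + 1 + Rabs C).
  pose proof (Rle_abs C). pose proof (Rabs_pos C). pose proof (Rpower_pos (M + 1) (/ (p - 4))).
  exists L. split; [unfold L; lra |].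
  assert (hL : M + 1 <= Rpower L (p - 4)).
  { replace (M + 1) with (Rpower (Rpower (M + 1) (/ (p - 4))) (p - 4))
      by (rewrite Rpower_mult, Rinv_l, Rpower_1; lra).
    apply Rle_Rpower_l; unfold L; lra. }
  assert (h24 : Rpower L (2 - q) <= Rpower L (4 - q)) by (apply Rle_Rpower; unfold L; lra).
  assert (hsplit : Rpower L (p - q) = Rpower L (4 - q) * Rpower L (p - 4))
    by (apply eq_sym, Rpower_add_exp; ring).
  assert (hMpc : p * c * M = 2 * a + 4 * b) by (unfold M; field; lra).
  unfold g_red. rewrite hsplit.
  pose proof (Rpower_pos L (4 - q)).
  assert (0 < p * c) by nra.
  assert (p * c * (M + 1) * Rpower L (4 - q) <= p * c * Rpower L (p - 4) * Rpower L (4 - q))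
    by (apply Rmult_le_compat_r; [lra | apply Rmult_le_compat_l; lra]).
  nra.
Qed.

(* f < 0 near 0, where -d t^q dominates. *)
Lemma f_neg_near_zero : exists s, 0 < s /\ forall t, 0 < t <= s -> f t < 0.
Proof.
  destruct (Rpower_combination_small a b (2 - q) (4 - q) d) as [s [hs hsmall]]; [lra .. |].
  exists s. split; [exact hs |]. intros t ht.
  specialize (hsmall t ht). rewrite f_factor by lra.
  pose proof (Rpower_pos t q). pose proof (Rpower_pos t (p - q)).
  assert (a * Rpower t (2 - q) + b * Rpower t (4 - q) - c * Rpower t (p - q) - d < 0) by nra.
  nra.
Qed.

Lemma ln_tau : ln tau = (ln X + ln b - ln c) / (p - 4).
Proof.
  destruct X_bounds as [hX _]. unfold tau.
  assert (hXb : 0 < X * b) by (apply Rmult_lt_0_compat; lra).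
  rewrite ln_Rpower, ln_quot, ln_mult by lra.
  field. lra.
Qed.

Lemma tau_powers :
  Rpower tau (2 - q) = Rpower X ((2 - q) / (p - 4)) * Rpower (b / c) ((2 - q) / (p - 4)) /\
  b * Rpower tau (4 - q) = Rpower X ((4 - q) / (p - 4))
    * (Rpower b ((p - q) / (p - 4)) / Rpower c ((4 - q) / (p - 4))) /\
  c * Rpower tau (p - q) = Rpower X ((p - q) / (p - 4))
    * (Rpower b ((p - q) / (p - 4)) / Rpower c ((4 - q) / (p - 4))).
Proof.
  unfold Rpower. rewrite ln_tau, ln_quot by lra.
  split; [| split].
  - rewrite <- exp_plus. f_equal. field. lra.
  - rewrite <- (exp_ln b) at 1 by lra.
    unfold Rdiv. rewrite <- exp_Ropp, <- !exp_plus. f_equal. field. lra.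
  - rewrite <- (exp_ln c) at 1 by lra.
    unfold Rdiv. rewrite <- exp_Ropp, <- !exp_plus. f_equal. field. lra.
Qed.

(* The hypothesis of the theorem forces f(tau) > 0: writing
   A = X^((4-q)/(p-4)), B = X^((p-q)/(p-4)), Gamma = X^((2-q)/(p-4)),
   U = (b/c)^((2-q)/(p-4)) and V = b^((p-q)/(p-4)) / c^((4-q)/(p-4)),
   the bracket of f(tau) is a Gamma U + (A - B) V - d with Gamma >= A >= A - B,
   hence exceeds (A - B)(a U + V) - d > 0. *)
Lemma f_tau_pos :
  (Rpower X ((4 - q) / (p - 4)) - Rpower X ((p - q) / (p - 4))) *
  (a / d * Rpower (b / c) ((2 - q) / (p - 4))
   + / d * (Rpower b ((p - q) / (p - 4)) / Rpower c ((4 - q) / (p - 4)))) > 1 ->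
  0 < f tau.
Proof.
  intros Hyp. destruct tau_powers as [e2 [e4 ep]].
  rewrite f_factor by exact tau_pos.
  rewrite e2, e4, ep.
  set (A := Rpower X ((4 - q) / (p - 4))) in *.
  set (B := Rpower X ((p - q) / (p - 4))) in *.
  set (Gamma := Rpower X ((2 - q) / (p - 4))).
  set (U := Rpower (b / c) ((2 - q) / (p - 4))) in *.
  set (V := Rpower b ((p - q) / (p - 4)) / Rpower c ((4 - q) / (p - 4))) in *.
  assert (hGA : A <= Gamma).
  { apply Rpower_antitone_exp; [exact X_bounds |].
    unfold Rdiv. apply Rmult_le_compat_r; [left; apply Rinv_0_lt_compat |]; lra. }
  assert (hB : 0 < B) by apply Rpower_pos.
  assert (hU : 0 < U) by apply Rpower_pos.
  assert (hS : d < (A - B) * (a * U + V)).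
  { replace ((A - B) * (a * U + V))
      with (d * ((A - B) * (a / d * U + / d * V))) by (field; lra).
    pose proof (Rmult_lt_compat_l d 1 _ hd Hyp). lra. }
  assert (hgap : 0 <= a * U * (Gamma - (A - B))) by (apply Rmult_le_pos; nra).
  assert (hbracket : 0 < a * (Gamma * U) + A * V - B * V - d) by nra.
  pose proof (Rpower_pos tau q). nra.
Qed.

(* Shape of f: if f is positive somewhere, f decreases, increases, then
   decreases, the turning points being the two sign changes of g_red. *)
Lemma f_down_up_down (T : R) : 0 < T -> 0 < f T -> exists t1 t2, down_up_down f t1 t2.
Proof.
  intros hT hfT.
  pose proof (fun t (_ : 0 < t) => Rpower_pos t (q - 1)) as phi_pos.
  destruct f_neg_near_zero as [s [hs hneg]].
  assert (hsT : s < T)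
    by (destruct (Rlt_le_dec s T) as [h | h]; [exact h | pose proof (hneg T (conj hT h)); lra]).
  pose proof (hneg s (conj hs (Rle_refl s))) as hfs.
  destruct (g_pos_where_increasing f _ g_red f_deriv phi_pos s T hs hsT ltac:(lra))
    as [w [hw hgw]].
  destruct (g_eventually_neg w) as [L [hwL hgL]].
  destruct (sign_pattern g_red w L (F_continuous g_red _ h_red g_deriv) g_no_interior_min
              g_neg_near_zero ltac:(lra) hgw hwL hgL)
    as [t1 [t2 [ht [neg1 [pos2 neg3]]]]].
  exists t1, t2. split; [exact ht | split; [| split]].
  - intros x y hx hxy hy. apply (F_decreasing f _ g_red f_deriv phi_pos); try lra.
    intros t ht'. apply neg1. lra.
  - intros x y hx hxy hy. apply (F_increasing f _ g_red f_deriv phi_pos); try lra.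
    intros t ht'. apply pos2. lra.
  - intros x y hx hxy. apply (F_decreasing f _ g_red f_deriv phi_pos); try lra.
    intros t ht'. apply neg3. lra.
Qed.
End Profile.

Theorem lemma4p3 (a b c d p q : R)
  (ha : 0 < a) (hb : 0 < b) (hc : 0 < c) (hd : 0 < d)
  (hp : 4 < p) (hq0 : 0 < q) (hq2 : q < 2) :
  let X := 8 * (4 - q) / (p * (p - 2) * (p - q)) in
  (Rpower X ((4 - q) / (p - 4)) - Rpower X ((p - q) / (p - 4))) *
  (a / d * Rpower (b / c) ((2 - q) / (p - 4))
   + / d * (Rpower b ((p - q) / (p - 4)) / Rpower c ((4 - q) / (p - 4)))) > 1 ->
  (exists t0, strict_local_min_on_nonneg (fabcd a b c d p q) t0
              /\ fabcd a b c d p q t0 < 0) /\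
  (exists t1, strict_global_max_on_nonneg (fabcd a b c d p q) t1
              /\ 0 < fabcd a b c d p q t1).
Proof.
  intros X Hyp.
  pose proof (f_tau_pos a b c d p q ha hb hc hd hp hq0 hq2 Hyp) as hf_tau.
  assert (hpos : exists T, 0 < T /\ 0 < fabcd a b c d p q T)
    by (exists (tau b c p q); split; [apply tau_pos | exact hf_tau]).
  assert (hzero : fabcd a b c d p q 0 <= 0) by (rewrite f_at_zero; lra).
  destruct (f_down_up_down a b c d p q ha hb hc hd hp hq0 hq2 _ (tau_pos b c p q) hf_tau)
    as [t1 [t2 Hshape]].
  destruct (extrema_of_down_up_down _ t1 t2 Hshape hzero
              (f_neg_near_zero a b c d p q ha hb hc hd hq2) hpos)
    as [[hmin hneg] [hmax hmax_pos]].
  split; [exists t1 | exists t2]; split; assumption.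
Qed.
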